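(* Let $n\ge 3$. For any tuple of integers $m=(m_1,\dots,m_{n-1})$ and any word $w(A,B)\in\mathbb F_2=\langle A,B\rangle$, the kernel $\operatorname{Ker}(\Theta_n^{w,m})$ contains a subgroup isomorphic to the free group of rank $2$.
   Context: For $n\ge 2$, the flat virtual braid group $FVB_n$ is the group with generators $\sigma_1,\dots,\sigma_{n-1},\rho_1,\dots,\rho_{n-1}$ and defining relations: $\sigma_i^2=1$, $\rho_i^2=1$ for $1\le i\le n-1$; $\sigma_i\sigma_{i+1}\sigma_i=\sigma_{i+1}\sigma_i\sigma_{i+1}$, $\rho_i\rho_{i+1}\rho_i=\rho_{i+1}\rho_i\rho_{i+1}$ and $\rho_i\rho_{i+1}\sigma_i=\sigma_{i+1}\rho_i\rho_{i+1}$ for $1\le i\le n-2$; $\sigma_i\sigma_j=\sigma_j\sigma_i$, $\rho_i\rho_j=\rho_j\rho_i$ and $\rho_i\sigma_j=\sigma_j\rho_i$ for $|i-j|\ge 2$. $\mathbb F_{2n}$ is the free group on $x_1,\dots,x_n,y_1,\dots,y_n$; automorphisms compose left to right, $(\varphi\psi)(f)=\psi(\varphi(f))$; generators not mentioned are fixed. For $w(A,B)\in\mathbb F_2$ and $m\in\mathbb Z^{n-1}$, $\Theta_n^{w,m}\colon FVB_n\to\mathrm{Aut}(\mathbb F_{2n})$ is the homomorphism given by $\Theta_n^{w,m}(\sigma_i): x_i\mapsto x_{i+1}a_i,\ x_{i+1}\mapsto x_i a_i^{-1}$, where $a_i=y_{i+1}^{m_2+\dots+m_i}\,w(y_i,y_{i+1})\,y_i^{-(m_1+\dots+m_{i-1})}$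 (empty sums are $0$, so $a_1=w(y_1,y_2)$); $\Theta_n^{w,m}(\rho_i): x_i\mapsto x_{i+1}y_{i+1}^{m_i},\ x_{i+1}\mapsto x_iy_i^{-m_i},\ y_i\mapsto y_{i+1},\ y_{i+1}\mapsto y_i$. *)

From mathcomp Require Import all_boot all_order all_algebra.
From Stdlib Require Import Relation_Operators.
Set Implicit Arguments. Unset Strict Implicit. Unset Printing Implicit Defensive.
Import GRing.Theory.
Local Open Scope ring_scope.

(* A letter is (generator, inv) where inv = true means the inverse letter. *)
Definition fword (G : eqType) := seq (G * bool).

Definition freduce (G : eqType) (s : fword G) : fword G :=
  foldr (fun x acc => match acc with
                      | y :: t => if (y.1 == x.1) && (y.2 != x.2) then t else x :: acc
                      | [::] => [:: x] end) [::] s.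

Definition finv (G : eqType) (s : fword G) : fword G :=
  rev (map (fun l => (l.1, ~~ l.2)) s).

Definition fsubst (G H : eqType) (phi : G -> fword H) (s : fword G) : fword H :=
  freduce (flatten [seq if l.2 then finv (phi l.1) else phi l.1 | l <- s]).

Definition fpow (G : eqType) (g : G) (k : int) : fword G :=
  match k with
  | Posz k => nseq k (g, false)
  | Negz k => nseq k.+1 (g, true)
  end.

(* ---------- F_2 = <A,B> : generator true = A, false = B ---------- *)
Definition F2word := fword bool.

(* ---------- F_{2n}: generator (true,i) = x_i, (false,i) = y_i ---------- *)
Definition F2ngen := (bool * nat)%type.
Definition xg (i : nat) : F2ngen := (true, i).
Definition yg (i : nat) : F2ngen := (false, i).

(* ---------- FVB_n : generator (true,i) = sigma_i, (false,i) = rho_i ------- *)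
Definition fvbgen := (bool * nat)%type.
Definition sig (i : nat) : fvbgen := (true, i).
Definition rho (i : nat) : fvbgen := (false, i).

(* a word in the generators of FVB_n (all generators are involutions, so
   every element of FVB_n is represented by a positive word) *)
Definition fvb_word (n : nat) (u : seq fvbgen) : Prop :=
  all (fun g => (1 <= g.2 <= n.-1)%N) u.

Inductive fvb_relator (n : nat) : seq fvbgen -> seq fvbgen -> Prop :=
| rel_ss i : (1 <= i <= n.-1)%N -> fvb_relator n [:: sig i; sig i] [::]
| rel_rr i : (1 <= i <= n.-1)%N -> fvb_relator n [:: rho i; rho i] [::]
| rel_sss i : (1 <= i <= n - 2)%N ->
    fvb_relator n [:: sig i; sig i.+1; sig i] [:: sig i.+1; sig i; sig i.+1]
| rel_rrr i : (1 <= i <= n - 2)%N ->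
    fvb_relator n [:: rho i; rho i.+1; rho i] [:: rho i.+1; rho i; rho i.+1]
| rel_rrs i : (1 <= i <= n - 2)%N ->
    fvb_relator n [:: rho i; rho i.+1; sig i] [:: sig i.+1; rho i; rho i.+1]
| rel_ss_far i j : (1 <= i <= n.-1)%N -> (1 <= j <= n.-1)%N -> (i + 2 <= j)%N || (j + 2 <= i)%N ->
    fvb_relator n [:: sig i; sig j] [:: sig j; sig i]
| rel_rr_far i j : (1 <= i <= n.-1)%N -> (1 <= j <= n.-1)%N -> (i + 2 <= j)%N || (j + 2 <= i)%N ->
    fvb_relator n [:: rho i; rho j] [:: rho j; rho i]
| rel_rs_far i j : (1 <= i <= n.-1)%N -> (1 <= j <= n.-1)%N -> (i + 2 <= j)%N || (j + 2 <= i)%N ->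
    fvb_relator n [:: rho i; sig j] [:: sig j; rho i].

Inductive fvb_step (n : nat) : seq fvbgen -> seq fvbgen -> Prop :=
| fvb_step_intro s1 s2 l r : fvb_relator n l r ->
    fvb_step n (s1 ++ l ++ s2) (s1 ++ r ++ s2).

Definition fvb_eq (n : nat) : seq fvbgen -> seq fvbgen -> Prop :=
  clos_refl_sym_trans _ (fvb_step n).

(* inverse of a positive word in FVB_n (generators are involutions) *)
Definition fvb_inv (u : seq fvbgen) : seq fvbgen := rev u.

Definition fvb_subst2 (u v : seq fvbgen) (W : F2word) : seq fvbgen :=
  flatten [seq let g := if l.1 then u else v in
               if l.2 then fvb_inv g else g | l <- W].

Definition wy (w : F2word) (i : nat) : fword F2ngen :=
  fsubst (fun b : bool => [:: (if b then yg i else yg i.+1, false)]) w.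

Definition a_word (w : F2word) (m : nat -> int) (i : nat) : fword F2ngen :=
  fpow (yg i.+1) (\sum_(2 <= j < i.+1) m j) ++ wy w i ++
  fpow (yg i) (- \sum_(1 <= j < i) m j).

Definition theta_gen (w : F2word) (m : nat -> int) (g : fvbgen)
  : F2ngen -> fword F2ngen :=
  let i := g.2 in
  if g.1 then
    fun h => if h == xg i then (xg i.+1, false) :: a_word w m i
             else if h == xg i.+1 then (xg i, false) :: finv (a_word w m i)
             else [:: (h, false)]
  else
    fun h => if h == xg i then (xg i.+1, false) :: fpow (yg i.+1) (m i)
             else if h == xg i.+1 then (xg i, false) :: fpow (yg i) (- m i)
             else if h == yg i then [:: (yg i.+1, false)]
             else if h == yg i.+1 then [:: (yg i, false)]
             else [:: (h, false)].

(* Theta(g_1 ... g_k)(f) = Theta(g_k)( ... Theta(g_1)(f)) : left-to-right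
   composition convention (phi psi)(f) = psi(phi(f)) *)
Definition theta (w : F2word) (m : nat -> int) (u : seq fvbgen)
  (f : fword F2ngen) : fword F2ngen :=
  foldl (fun f g => fsubst (theta_gen w m g) f) f u.

Definition in_kernel (n : nat) (w : F2word) (m : nat -> int) (u : seq fvbgen) : Prop :=
  forall (b : bool) (i : nat), (1 <= i <= n)%N ->
    theta w m u [:: ((b, i), false)] = [:: ((b, i), false)].

From Pilot Require Import Defs.
From mathcomp Require Import all_boot all_order all_algebra.
From Stdlib Require Import Setoid Morphisms.
From mathcomp Require Import zify.
Set Implicit Arguments. Unset Strict Implicit. Unset Printing Implicit Defensive.

(* The two generators are u = (s1 r2)^6 and its conjugate v = r2 r1 u r1 r2
   (s_i = sigma_i, r_i = rho_i).  They lie in every kernel because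
   Theta((s1 r2)^2) is an automorphism of order 3, whatever w and m are
   (and r_i is an involution).  To see that they generate a free group we
   use an invariant of FVB_n with values in F_2: label the strands 1..n,
   let every classical crossing s_i of the strands labelled a, b record a
   letter of F_2 (A^{+-1} for {a,b} = {1,2} or {2,3}, B^{+-1} for {1,3},
   nothing otherwise) and let every generator permute the labels.  The
   freely reduced product of the recorded letters is invariant under the
   defining relations of FVB_n.  It sends u, v to (A A B^-1)^2 and
   (B^-1 A A)^2, so every nonempty reduced word in u, v is sent to a
   nonempty reduced word, hence is nontrivial in FVB_n. *)

(* [finv] is also the name of the inverse of an injection in fingraph. *)
Notation finv := Defs.finv.

Local Open Scope ring_scope.

Section FreeReduction.
Variable G : eqType.
Implicit Types (x y : G * bool) (s t : fword G).

Definition linv x : G * bool := (x.1, ~~ x.2).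

Definition push x s : fword G :=
  if s is y :: t then (if y == linv x then t else x :: s) else [:: x].

Definition reduced s := sorted (fun x y => y != linv x) s.

Lemma freduce_cons x s : freduce (x :: s) = push x (freduce s).
Proof.
rewrite /= /push; case: (freduce s) => //= -[c d] t.
by case: x => a b; rewrite /linv xpair_eqE; case: b; case: d.
Qed.

#[global] Arguments freduce : simpl never.

Lemma linvK x : linv (linv x) = x.
Proof. by case: x => a b; rewrite /linv /= negbK. Qed.

Lemma letter_neq_linv x : (x == linv x) = false.
Proof. by case: x => a b; rewrite /linv xpair_eqE eqxx /=; case: b. Qed.

Lemma reduced_push x s : reduced s -> reduced (push x s).
Proof.
case: s => [|y t] //= Hs; case: ifP => [_|/negbT Hyx] /=; last by rewrite Hyx Hs.
by case: t Hs => // z t /andP [].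
Qed.

Lemma reduced_freduce s : reduced (freduce s).
Proof. by elim: s => // x s IH; rewrite freduce_cons; apply: reduced_push. Qed.

Lemma freduce_id s : reduced s -> freduce s = s.
Proof.
elim: s => // x s IH Hs; rewrite freduce_cons IH; last exact: path_sorted Hs.
by case: s Hs {IH} => // y t /andP [Hyx _]; rewrite /push (negbTE Hyx).
Qed.

Lemma reduced_nseq n (x : G * bool) : reduced (nseq n x).
Proof.
elim: n => // -[|n] //= IH; rewrite letter_neq_linv.
by rewrite /reduced /= in IH.
Qed.

Lemma freduce_idem s : freduce (freduce s) = freduce s.
Proof. exact/freduce_id/reduced_freduce. Qed.

Lemma push_linvK x s : reduced s -> push x (push (linv x) s) = s.
Proof.
case: s => [|y t] Hs; first by rewrite /push /= eqxx.
rewrite [push (linv x) _]/push linvK; case: ifP => [/eqP Eyx|_]; last by rewrite /push eqxx.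
by subst y; case: t Hs => [|y' t] //= /andP [Hy' _]; rewrite /push (negbTE Hy').
Qed.

Lemma freduce_catl s t : freduce (s ++ t) = freduce (freduce s ++ t).
Proof.
elim: s => // x s IH.
rewrite cat_cons freduce_cons IH [in RHS]freduce_cons -[LHS]freduce_cons.
case: (freduce s) => [|y r] //; rewrite /push; case: ifP => [/eqP Ey|_] //.
by subst y; rewrite !freduce_cons push_linvK //; apply: reduced_freduce.
Qed.

Lemma freduce_catr s t : freduce (s ++ t) = freduce (s ++ freduce t).
Proof.
elim: s => [|x s IH]; first by rewrite freduce_idem.
by rewrite !cat_cons !freduce_cons IH.
Qed.

Lemma finv_cons x s : finv (x :: s) = finv s ++ [:: linv x].
Proof. by rewrite /Defs.finv /= rev_cons cats1. Qed.

Lemma finv_cat s t : finv (s ++ t) = finv t ++ finv s.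
Proof. by rewrite /Defs.finv map_cat rev_cat. Qed.

Lemma finvK s : finv (finv s) = s.
Proof.
rewrite /Defs.finv map_rev revK -map_comp map_id_in //.
by case=> a b _ /=; rewrite negbK.
Qed.

Lemma freduce_invr s : freduce (s ++ finv s) = [::].
Proof.
elim: s => // x s IH.
rewrite finv_cons cat_cons catA freduce_cons freduce_catl IH.
by rewrite /= freduce_cons /push eqxx.
Qed.

Lemma freduce_invl s : freduce (finv s ++ s) = [::].
Proof. by rewrite -{2}(finvK s) freduce_invr. Qed.

Lemma freduce_finv s : freduce (finv (freduce s)) = freduce (finv s).
Proof.
have E : freduce (finv (freduce s) ++ s) = [::] by rewrite freduce_catr freduce_invl.
transitivity (freduce (finv (freduce s) ++ freduce (s ++ finv s))).
  by rewrite freduce_invr cats0.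
by rewrite -freduce_catr catA freduce_catl E.
Qed.

(* Equality in the free group on G: equal free reductions.  It is a
   congruence for concatenation and inversion, which lets us compute in
   the free group by setoid rewriting on words. *)
Definition feq s t := freduce s = freduce t.

Global Instance feq_equiv : Equivalence feq.
Proof. by split=> [s|s t E|s t r E1 E2]; rewrite /feq ?E1. Qed.

Global Instance cat_proper : Proper (feq ==> feq ==> feq) (@cat (G * bool)).
Proof.
move=> s s' E t t' E'.
by rewrite /feq freduce_catl E -freduce_catl freduce_catr E' -freduce_catr.
Qed.

Global Instance cons_proper x : Proper (feq ==> feq) (cons x).
Proof. by move=> s t E; rewrite /feq !freduce_cons E. Qed.

Global Instance finv_proper : Proper (feq ==> feq) (@Defs.finv G).
Proof. by move=> s t E; rewrite /feq -freduce_finv E freduce_finv. Qed.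

Lemma feq_freduce s : feq (freduce s) s. Proof. exact: freduce_idem. Qed.

Lemma feq_invr s : feq (s ++ finv s) [::]. Proof. exact: freduce_invr. Qed.
Lemma feq_invl s : feq (finv s ++ s) [::]. Proof. exact: freduce_invl. Qed.

Lemma feq_invr_cat s t : feq (s ++ finv s ++ t) t.
Proof. by rewrite catA feq_invr. Qed.

Lemma feq_invl_cat s t : feq (finv s ++ s ++ t) t.
Proof. by rewrite catA feq_invl. Qed.

Lemma feq_reduced_eq s t : feq s t -> reduced s -> reduced t -> s = t.
Proof. by rewrite /feq => E /freduce_id <- /freduce_id <-. Qed.

(* Reducedness is a condition on adjacent letters: it can be checked on
   overlapping pieces sharing a nonempty middle part. *)
Lemma reduced_cat3 s t r :
  t != [::] -> reduced (s ++ t) -> reduced (t ++ r) -> reduced (s ++ t ++ r).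
Proof.
case: t => // y t _; case: s => [|x s] //= H1 H2.
rewrite cat_path in H1; case/andP: H1 => Hs /andP [Hy _].
by rewrite cat_path Hs /= Hy.
Qed.

End FreeReduction.

Arguments feq {G} s t.
Arguments linv {G} x.

Lemma reduced_flatten (H K : eqType) (f : H * bool -> fword K) (W : fword H) :
  (forall l, f l != [::]) ->
  (forall l l', l' != linv l -> reduced (f l ++ f l')) ->
  reduced W -> reduced (flatten [seq f l | l <- W]).
Proof.
move=> Hne Hpair; have Hsingle l : reduced (f l).
  by have /cat_sorted2 [] := Hpair l l (negbT (letter_neq_linv l)).
elim: W => [|l W IH] // HW; case: W IH HW => [|l' W] IH HW /=; first by rewrite cats0.
case/andP: HW => Hll' HW; apply: reduced_cat3 (Hne l') (Hpair l l' Hll') _.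
exact: IH.
Qed.

Section Substitution.
Variables (G H : eqType) (phi : G -> fword H).
Implicit Types (s t : fword G).

Definition letter_image (l : G * bool) : fword H :=
  if l.2 then finv (phi l.1) else phi l.1.

Definition subst_word s : fword H := flatten [seq letter_image l | l <- s].

Lemma subst_word_cat s t : subst_word (s ++ t) = subst_word s ++ subst_word t.
Proof. by rewrite /subst_word map_cat flatten_cat. Qed.

Lemma letter_image_linv l : letter_image (linv l) = finv (letter_image l).
Proof. by case: l => a [] //=; rewrite /letter_image /= finvK. Qed.

Lemma fsubst_feq s : feq (fsubst phi s) (subst_word s).
Proof. exact: feq_freduce. Qed.

Lemma subst_word_cons x s : subst_word (x :: s) = letter_image x ++ subst_word s.
Proof. by []. Qed.

Lemma subst_word_push x s : feq (subst_word (push x s)) (letter_image x ++ subst_word s).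
Proof.
case: s => [|y s] //; rewrite /push; case: ifP => [/eqP ->|_] //.
by rewrite subst_word_cons letter_image_linv feq_invr_cat.
Qed.

Lemma fsubst_freduce s : fsubst phi (freduce s) = fsubst phi s.
Proof.
elim: s => // x s IH; rewrite [LHS]/fsubst freduce_cons.
change (feq (subst_word (push x (freduce s))) (subst_word (x :: s))).
by rewrite subst_word_push subst_word_cons -(fsubst_feq (freduce s)) IH fsubst_feq.
Qed.

Lemma fsubst_cat s t : feq (fsubst phi (s ++ t)) (fsubst phi s ++ fsubst phi t).
Proof. by rewrite !fsubst_feq subst_word_cat. Qed.

Lemma fsubst_cons x s : feq (fsubst phi (x :: s)) (letter_image x ++ fsubst phi s).
Proof. by rewrite !fsubst_feq. Qed.

Lemma fsubst1 g : fsubst phi [:: (g, false)] = freduce (phi g).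
Proof. by rewrite /fsubst /= cats0. Qed.

Lemma fsubst_finv s : feq (fsubst phi (finv s)) (finv (fsubst phi s)).
Proof.
elim: s => [|x s IH] //.
rewrite finv_cons fsubst_cat IH (fsubst_cons x s) finv_cat (fsubst_feq [:: linv x]).
by rewrite subst_word_cons cats0 letter_image_linv.
Qed.

Lemma fsubst_reduced s : reduced (fsubst phi s).
Proof. exact: reduced_freduce. Qed.

End Substitution.

Global Instance fsubst_proper (G H : eqType) (phi : G -> fword H) :
  Proper (feq ==> feq) (fsubst phi).
Proof. by move=> s t E; rewrite -fsubst_freduce E fsubst_freduce. Qed.

Lemma fsubst_ext (G H : eqType) (phi psi : G -> fword H) s :
  (forall g, feq (phi g) (psi g)) -> fsubst phi s = fsubst psi s.
Proof.
move=> E; apply: feq_reduced_eq; try exact: fsubst_reduced.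
elim: s => [|[g b] s IH] //; rewrite !fsubst_cons IH.
by case: b; rewrite /letter_image /= E.
Qed.

Lemma fsubst_comp (G H K : eqType) (phi : G -> fword H) (psi : H -> fword K) s :
  fsubst psi (fsubst phi s) = fsubst (fun g => fsubst psi (phi g)) s.
Proof.
apply: feq_reduced_eq; try exact: fsubst_reduced.
elim: s => [|[g b] s IH] //.
rewrite (fsubst_cons (fun g => fsubst psi (phi g))) -IH (fsubst_cons phi) fsubst_cat.
by case: b; rewrite /letter_image /= ?fsubst_finv.
Qed.

Lemma fsubst_unit (G : eqType) (s : fword G) :
  fsubst (fun g => [:: (g, false)]) s = freduce s.
Proof.
rewrite /fsubst; congr freduce; elim: s => // [[g b] s] IH.
by rewrite /= -/(subst_word _ s) IH; case: b.
Qed.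

Section Powers.
Variable G : eqType.

Lemma fpow_opp (g : G) k : fpow g (- k) = finv (fpow g k).
Proof.
case: k => [[|k]|k] //=; rewrite /Defs.finv.
all: rewrite -[(g, false) :: _]/(nseq k.+1 _) -[(g, true) :: _]/(nseq k.+1 _).
all: by rewrite map_nseq rev_nseq.
Qed.

Lemma fsubst_fpow (H : eqType) (phi : G -> fword H) g g' k :
  freduce (phi g) = [:: (g', false)] -> fsubst phi (fpow g k) = fpow g' k.
Proof.
move=> Hg; have Hb b : feq (letter_image phi (g, b)) [:: (g', b)].
  by case: b; rewrite /letter_image /feq /= ?Hg // -freduce_finv Hg.
suff E b j : fsubst phi (nseq j (g, b)) = nseq j (g', b) by case: k => j; apply: E.
apply: feq_reduced_eq; [|exact: fsubst_reduced|exact: reduced_nseq].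
by elim: j => [|j IH] //=; rewrite fsubst_cons IH Hb.
Qed.

End Powers.

Definition w_at (w : F2word) (a b : nat) : fword F2ngen :=
  fsubst (fun c : bool => [:: (if c then yg a else yg b, false)]) w.

Lemma fsubst_w_at (phi : F2ngen -> fword F2ngen) w a b a' b' :
  freduce (phi (yg a)) = [:: (yg a', false)] ->
  freduce (phi (yg b)) = [:: (yg b', false)] ->
  fsubst phi (w_at w a b) = w_at w a' b'.
Proof.
move=> Ha Hb; rewrite /w_at fsubst_comp; apply: fsubst_ext => -[];
by rewrite fsubst1 ?Ha ?Hb.
Qed.

Lemma succn_eqF i : (i.+1 == i) = false. Proof. by elim: i. Qed.
Lemma eq_succnF i : (i == i.+1) = false. Proof. by elim: i. Qed.
Lemma xyE a b : (xg a == yg b) = false. Proof. by []. Qed.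
Lemma yxE a b : (yg a == xg b) = false. Proof. by []. Qed.
Lemma xxE a b : (xg a == xg b) = (a == b). Proof. by rewrite /xg xpair_eqE. Qed.
Lemma yyE a b : (yg a == yg b) = (a == b). Proof. by rewrite /yg xpair_eqE. Qed.

Ltac gen_simpl :=
  rewrite /= ?xyE ?yxE ?yyE ?xxE ?succn_eqF ?eq_succnF ?eqxx /=.

Section ThetaComputations.
Variables (w : F2word) (m : nat -> int).
Notation theta := (theta w m).
Notation k := (m 2).
Notation W := (w_at w).

Lemma theta_cat s t f : theta (s ++ t) f = theta t (theta s f).
Proof. by rewrite /Defs.theta foldl_cat. Qed.

Lemma theta_freduce g s f : theta (g :: s) (freduce f) = theta (g :: s) f.
Proof. by rewrite /= fsubst_freduce. Qed.

Lemma theta_pair_comp g g' f :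
  theta [:: g; g'] f =
  fsubst (fun h => fsubst (theta_gen w m g') (theta_gen w m g h)) f.
Proof. by rewrite /= fsubst_comp. Qed.

Lemma theta_rho_sq i f : theta [:: rho i; rho i] f = freduce f.
Proof.
rewrite theta_pair_comp -fsubst_unit; apply: fsubst_ext => h; rewrite /theta_gen /=.
case: (eqVneq h (xg i)) => [->|n1].
  rewrite fsubst_cons (@fsubst_fpow _ _ _ (yg i.+1) (yg i)); last by gen_simpl.
  by rewrite /letter_image; gen_simpl; rewrite fpow_opp feq_invl.
case: (eqVneq h (xg i.+1)) => [->|n2].
  rewrite fsubst_cons (@fsubst_fpow _ _ _ (yg i) (yg i.+1)); last by gen_simpl.
  by rewrite /letter_image; gen_simpl; rewrite fpow_opp feq_invr.
case: (eqVneq h (yg i)) => [->|n3]; first by rewrite fsubst1; gen_simpl.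
case: (eqVneq h (yg i.+1)) => [->|n4]; first by rewrite fsubst1; gen_simpl.
by rewrite fsubst1 /= (negbTE n1) (negbTE n2) (negbTE n3) (negbTE n4).
Qed.

Definition tau (h : F2ngen) : fword F2ngen :=
  if h == xg 1 then (xg 3, false) :: fpow (yg 3) k ++ W 1 3
  else if h == xg 2 then (xg 1, false) :: finv (W 1 3)
  else if h == xg 3 then (xg 2, false) :: fpow (yg 2) (- k)
  else if h == yg 2 then [:: (yg 3, false)]
  else if h == yg 3 then [:: (yg 2, false)]
  else [:: (h, false)].

Lemma theta_tau f : theta [:: sig 1; rho 2] f = fsubst tau f.
Proof.
have a1 : a_word w m 1 = W 1 2 by rewrite /a_word !big_geq //= cats0.
rewrite theta_pair_comp; apply: fsubst_ext => -[[] [|[|[|[|j]]]]];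
  rewrite /theta_gen /tau; gen_simpl; rewrite ?fsubst1 ?a1 //=; gen_simpl => //.
- by rewrite fsubst_cons /letter_image; gen_simpl; rewrite (@fsubst_w_at _ w 1 2 1 3).
- rewrite fsubst_cons /letter_image; gen_simpl.
  by rewrite fsubst_finv (@fsubst_w_at _ w 1 2 1 3).
- exact: feq_freduce.
Qed.

Definition pi (h : F2ngen) : fword F2ngen :=
  if h == xg 1 then (xg 2, false) :: W 1 2
  else if h == xg 2 then (xg 3, false) :: fpow (yg 3) k ++ W 1 3 ++ finv (W 1 2)
  else if h == xg 3 then (xg 1, false) :: finv (W 1 3) ++ fpow (yg 3) (- k)
  else [:: (h, false)].

Lemma theta_pi f : theta [:: sig 1; rho 2; sig 1; rho 2] f = fsubst pi f.
Proof.
rewrite (theta_cat [:: sig 1; rho 2] [:: sig 1; rho 2]) !theta_tau fsubst_comp.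
apply: fsubst_ext => -[[] [|[|[|[|j]]]]]; rewrite {2}/tau /pi; gen_simpl;
  rewrite ?fsubst1 /tau; gen_simpl => //.
- rewrite fsubst_cons fsubst_cat /letter_image; gen_simpl.
  rewrite (@fsubst_fpow _ _ tau (yg 3) (yg 2)) // (@fsubst_w_at tau w 1 3 1 2) // /tau.
  by gen_simpl; rewrite fpow_opp feq_invl_cat.
- rewrite fsubst_cons fsubst_finv /letter_image; gen_simpl.
  by rewrite (@fsubst_w_at tau w 1 3 1 2) // /tau; gen_simpl; rewrite /feq -catA.
- rewrite fsubst_cons /letter_image; gen_simpl.
  by rewrite (@fsubst_fpow _ _ tau (yg 2) (yg 3)) // /tau; gen_simpl.
Qed.

Lemma pi_w_at a b : (a < 4)%N -> (b < 4)%N -> fsubst pi (W a b) = W a b.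
Proof.
by move=> Ha Hb; apply: fsubst_w_at; rewrite /pi; gen_simpl;
  [case: a Ha => [|[|[|[|]]]] | case: b Hb => [|[|[|[|]]]]].
Qed.

Lemma pi_fpow j : fsubst pi (fpow (yg 3) j) = fpow (yg 3) j.
Proof. by apply: fsubst_fpow; rewrite /pi; gen_simpl. Qed.

Definition pi2 (h : F2ngen) : fword F2ngen :=
  if h == xg 1 then (xg 3, false) :: fpow (yg 3) k ++ W 1 3
  else if h == xg 2 then (xg 1, false) :: finv (W 1 2)
  else if h == xg 3 then (xg 2, false) :: W 1 2 ++ finv (W 1 3) ++ fpow (yg 3) (- k)
  else [:: (h, false)].

Lemma pi_pi h : feq (fsubst pi (pi h)) (pi2 h).
Proof.
case: h => -[] [|[|[|[|j]]]]; rewrite {2}/pi /pi2; gen_simpl;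
  rewrite ?fsubst1 /pi; gen_simpl => //;
  rewrite fsubst_cons ?fsubst_cat ?fsubst_finv /letter_image; gen_simpl;
  rewrite ?pi_w_at // ?pi_fpow /pi; gen_simpl => //.
- by rewrite -!catA feq_invl cats0.
- by rewrite -!catA fpow_opp !feq_invl_cat.
Qed.

Lemma pi_pi2 h : feq (fsubst pi (pi2 h)) [:: (h, false)].
Proof.
case: h => -[] [|[|[|[|j]]]]; rewrite /pi2; gen_simpl;
  rewrite ?fsubst1 /pi; gen_simpl => //;
  rewrite fsubst_cons ?fsubst_cat ?fsubst_finv /letter_image; gen_simpl;
  rewrite ?pi_w_at // ?pi_fpow /pi; gen_simpl.
- by rewrite -!catA fpow_opp feq_invl_cat feq_invl.
- by rewrite feq_invr.
- by rewrite -!catA feq_invl_cat feq_invr_cat fpow_opp feq_invr.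
Qed.

End ThetaComputations.

Definition u_gen : seq fvbgen :=
  let s := [:: sig 1; rho 2; sig 1; rho 2] in s ++ s ++ s.

Definition v_gen : seq fvbgen := [:: rho 2; rho 1] ++ u_gen ++ [:: rho 1; rho 2].

(* u = ((s1 r2)^2)^3 acts trivially because Theta((s1 r2)^2) has order 3,
   and hence so does its conjugate v, as the r_i are involutions. *)
Lemma theta_u_gen w m f : theta w m u_gen f = freduce f.
Proof.
rewrite /u_gen !theta_cat !theta_pi !fsubst_comp -fsubst_unit.
by apply: fsubst_ext => h; rewrite -fsubst_comp pi_pi pi_pi2.
Qed.

Lemma theta_v_gen w m f : theta w m v_gen f = freduce f.
Proof.
rewrite /v_gen theta_cat (theta_cat _ _ u_gen) theta_u_gen theta_freduce.
rewrite -theta_cat (_ : _ ++ _ = [:: rho 2] ++ [:: rho 1; rho 1] ++ [:: rho 2]) //.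
by rewrite !theta_cat theta_rho_sq theta_freduce -theta_cat theta_rho_sq.
Qed.

Local Close Scope ring_scope.

Definition crossing_letter (a b : nat) : fword bool :=
  match a, b with
  | 1, 2 | 2, 3 => [:: (true, false)]
  | 2, 1 | 3, 2 => [:: (true, true)]
  | 1, 3 => [:: (false, false)]
  | 3, 1 => [:: (false, true)]
  | _, _ => [::]
  end.

Lemma crossing_letter_sym a b : crossing_letter b a = finv (crossing_letter a b).
Proof. by case: a => [|[|[|[|a]]]]; case: b => [|[|[|[|b]]]]. Qed.

Lemma crossing_letter_braid a b c :
  feq (crossing_letter a b ++ crossing_letter a c ++ crossing_letter b c)
      (crossing_letter b c ++ crossing_letter a c ++ crossing_letter a b).
Proof.
by case: a => [|[|[|[|a]]]]; case: b => [|[|[|[|b]]]]; case: c => [|[|[|[|c]]]].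
Qed.

Lemma crossing_letter_comm a b c d : a != c -> a != d -> b != c -> b != d ->
  feq (crossing_letter a b ++ crossing_letter c d)
      (crossing_letter c d ++ crossing_letter a b).
Proof.
by case: a => [|[|[|[|a]]]]; case: b => [|[|[|[|b]]]]; case: c => [|[|[|[|c]]]];
  case: d => [|[|[|[|d]]]].
Qed.

(* The transposition (i i+1) of positions, and its effect on a labelling g
   of positions by strand labels. *)
Definition swap_pos (i p : nat) : nat :=
  if p == i then i.+1 else if p == i.+1 then i else p.

Definition relabel (i : nat) (g : nat -> nat) : nat -> nat := fun p => g (swap_pos i p).

Lemma swap_posK i p : swap_pos i (swap_pos i p) = p.
Proof. rewrite /swap_pos; repeat case: eqP; lia. Qed.

Lemma swap_pos_braid i p :
  swap_pos i (swap_pos i.+1 (swap_pos i p)) = swap_pos i.+1 (swap_pos i (swap_pos i.+1 p)).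
Proof. rewrite /swap_pos; repeat case: eqP; lia. Qed.

Lemma swap_pos_far i j p : (i + 2 <= j) || (j + 2 <= i) ->
  swap_pos i (swap_pos j p) = swap_pos j (swap_pos i p).
Proof. move=> H; rewrite /swap_pos; repeat case: eqP; lia. Qed.

Lemma swap_pos_out i p : p != i -> p != i.+1 -> swap_pos i p = p.
Proof. by move=> /negPf H1 /negPf H2; rewrite /swap_pos H1 H2. Qed.

Fixpoint crossings (g : nat -> nat) (u : seq fvbgen) : fword bool :=
  if u is x :: u' then
    (if x.1 then crossing_letter (g x.2) (g x.2.+1) else [::]) ++
    crossings (relabel x.2 g) u'
  else [::].

Fixpoint labels (g : nat -> nat) (u : seq fvbgen) : nat -> nat :=
  if u is x :: u' then labels (relabel x.2 g) u' else g.

Lemma crossings_ext u g g' : g =1 g' -> crossings g u = crossings g' u.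
Proof.
elim: u g g' => //= x u IH g g' E; rewrite !E (IH _ (relabel x.2 g')) // => p.
exact: E.
Qed.

Lemma crossings_cat g s t :
  crossings g (s ++ t) = crossings g s ++ crossings (labels g s) t.
Proof. by elim: s g => //= x s IH g; rewrite IH catA. Qed.

Lemma labels_inj g s : injective g -> injective (labels g s).
Proof.
elim: s g => //= x s IH g Hg; apply: IH => p q /Hg E.
by rewrite -(swap_posK x.2 p) E swap_posK.
Qed.

Lemma relator_invariant n l r g : fvb_relator n l r -> injective g ->
  feq (crossings g l) (crossings g r) /\ labels g l =1 labels g r.
Proof.
have eqS p : swap_pos p p = p.+1 by rewrite /swap_pos eqxx.
have eqSn p : swap_pos p p.+1 = p by rewrite /swap_pos eqxx; case: eqP; lia.
have eqS2 p : swap_pos p p.+2 = p.+2 by rewrite /swap_pos; repeat case: eqP; lia.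
have eqSp p : swap_pos p.+1 p = p by rewrite /swap_pos; repeat case: eqP; lia.
have far i j : (i + 2 <= j) || (j + 2 <= i) ->
    [/\ i != j, i != j.+1, i.+1 != j & i.+1 != j.+1] by move=> H; split; apply/eqP; lia.
case=> [i _|i _|i _|i _|i _|i j _ _ H|i j _ _ H|i j _ _ H] Hg;
  rewrite /= /relabel ?cats0; try have [h1 h2 h3 h4] := far _ _ H.
- split=> [|p]; last by rewrite swap_posK.
  by rewrite eqS eqSn crossing_letter_sym feq_invl.
- by split=> // p; rewrite swap_posK.
- split=> [|p]; last by rewrite swap_pos_braid.
  by rewrite !(eqS, eqSn, eqS2, eqSp) crossing_letter_braid.
- by split=> // p; rewrite swap_pos_braid.
- split=> [|p]; last by rewrite swap_pos_braid.
  by rewrite !(eqS, eqSn, eqS2, eqSp).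
- split=> [|p]; last by rewrite swap_pos_far.
  rewrite (@swap_pos_out i j) 1?eq_sym // (@swap_pos_out i j.+1) ?eqSS 1?eq_sym //.
  rewrite (@swap_pos_out j i) // (@swap_pos_out j i.+1) ?eqSS //.
  by apply: crossing_letter_comm; rewrite (inj_eq Hg).
- by split=> // p; rewrite swap_pos_far.
- split=> [|p]; last by rewrite swap_pos_far.
  by rewrite (@swap_pos_out i j) 1?eq_sym // (@swap_pos_out i j.+1) ?eqSS 1?eq_sym.
Qed.

Lemma fvb_eq_invariant n s t : fvb_eq n s t -> feq (crossings id s) (crossings id t).
Proof.
elim=> [_ _ [s1 s2 l r R]|//|s' t' _ IH|s' t' r' _ IH1 _ IH2].
- have [E1 E2] := relator_invariant R (@labels_inj id s1 (fun p q => id)).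
  by rewrite !crossings_cat (crossings_ext s2 E2) E1.
- by symmetry.
- by rewrite IH1.
Qed.

Definition letter_gen (l : bool * bool) : seq fvbgen :=
  let g := if l.1 then u_gen else v_gen in if l.2 then fvb_inv g else g.

Lemma labels_letter_gen l : labels id (letter_gen l) =1 id.
Proof. by case: l => [[] []] p; case: p => [|[|[|[|p]]]]. Qed.

Definition gen_image (l : bool * bool) : fword bool :=
  let: (A, Bi) := ((true, false), (false, true)) in
  let s := if l.1 then [:: A; A; Bi; A; A; Bi] else [:: Bi; A; A; Bi; A; A] in
  if l.2 then finv s else s.

Lemma crossings_letter_gen l : crossings id (letter_gen l) = gen_image l.
Proof. by case: l => [[] []]. Qed.

Lemma crossings_subst2 W :
  crossings id (fvb_subst2 u_gen v_gen W) = flatten [seq gen_image l | l <- W].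
Proof.
elim: W => // l W IH; rewrite /fvb_subst2 /= -/(letter_gen l) crossings_cat.
rewrite -/(fvb_subst2 u_gen v_gen W) -IH (crossings_ext _ (labels_letter_gen l)).
by rewrite crossings_letter_gen.
Qed.

Lemma gen_image_nil l : gen_image l != [::].
Proof. by case: l => [[] []]. Qed.

Lemma gen_image_pair l l' : l' != linv l -> reduced (gen_image l ++ gen_image l').
Proof. by case: l => [[] []]; case: l' => [[] []]. Qed.

Theorem mainTheorem10 (n : nat) (w : F2word) (m : nat -> int) :
  (3 <= n)%N ->
  exists u v : seq fvbgen,
    [/\ fvb_word n u, fvb_word n v, in_kernel n w m u, in_kernel n w m v &
        forall W : F2word, W <> [::] -> freduce W = W ->
          ~ fvb_eq n (fvb_subst2 u v W) [::]].
Proof.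
move=> Hn; exists u_gen, v_gen.
have gens : (1 <= n.-1)%N && (2 <= n.-1)%N by apply/andP; split; lia.
split; try by rewrite /fvb_word /=; case/andP: gens => -> ->.
- by move=> b i _; rewrite theta_u_gen.
- by move=> b i _; rewrite theta_v_gen.
move=> W Wne Wred /fvb_eq_invariant; rewrite crossings_subst2 => Heq.
have Hred : reduced (flatten [seq gen_image l | l <- W]).
  apply: reduced_flatten; [exact: gen_image_nil|exact: gen_image_pair|].
  by rewrite -Wred; apply: reduced_freduce.
have Hnil : flatten [seq gen_image l | l <- W] = [::] by apply: feq_reduced_eq Heq Hred _.
case: W Wne Hnil {Wred Hred Heq} => // l W _ /=.
by case: (gen_image l) (gen_image_nil l).
Qed.
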